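(* Let $D$ be a finite digraph and let $\mathcal{S}=\{S_1,\dots,S_t\}$ be a greedy dicoloring of $D$. Then there exists a good path partition of $D$ with respect to $\mathcal{S}$.
   Context: A greedy dicoloring of $D$ is a partition $\mathcal{S}=\{S_1,\dots,S_t\}$ of $V(D)$ such that $S_1$ is a maximum-size vertex set inducing an acyclic subdigraph of $D$, and for each $i\in\{2,\dots,t\}$, $S_i$ is a maximum-size vertex set inducing an acyclic subdigraph of $D-\bigcup_{j=1}^{i-1}S_j$. A path partition of $D$ is a collection of vertex-disjoint directed paths covering $V(D)$. A good path partition with respect to $\mathcal{S}$ is a path partition $\mathcal{P}$ of $D$ such that for every path $(v_1,\dots,v_\ell)\in\mathcal{P}$ and every $i\in\{1,\dots,\ell\}$, $v_i\in S_i$. *)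

From mathcomp Require Import all_boot.
Set Implicit Arguments. Unset Strict Implicit. Unset Printing Implicit Defensive.

Section Digraph.
Variables (T : finType) (e : rel T).

Definition is_dicycle (c : seq T) : bool :=
  [&& c != [::], uniq c & cycle e c].

Definition acyclic_set (A : {set T}) : Prop :=
  forall c : seq T, is_dicycle c -> ~ {subset c <= A}.

Definition remaining (S : seq {set T}) (i : nat) : {set T} :=
  ~: \bigcup_(j < i) nth set0 S j.

(* Greedy dicoloring S = [:: S_1; ...; S_t] (0-indexed here): a partition of
   V(D) into nonempty parts such that each S_i is a maximum-size acyclic set of
   D - (S_1 u ... u S_{i-1}). *)
Definition greedy_dicoloring (S : seq {set T}) : Prop :=
  (forall i, i < size S ->
     [/\ nth set0 S i != set0,
         nth set0 S i \subset remaining S i,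
         acyclic_set (nth set0 S i)
       & forall A : {set T}, A \subset remaining S i -> acyclic_set A ->
           #|A| <= #|nth set0 S i| ]) /\
  (forall v : T, exists2 i, i < size S & v \in nth set0 S i).

Definition is_dipath (p : seq T) : bool :=
  if p is x :: q then path e x q && uniq p else false.

Definition path_partition (P : seq (seq T)) : Prop :=
  [/\ all is_dipath P, uniq (flatten P) & forall v : T, v \in flatten P].

(* Good path partition w.r.t. S: the i-th vertex of every path lies in S_i
   (0-indexed; nth with default set0 forces size p <= size S). *)
Definition good_path_partition (S : seq {set T}) (P : seq (seq T)) : Prop :=
  path_partition P /\
  (forall p, p \in P -> forall (x0 : T) (i : nat), i < size p ->
     nth x0 p i \in nth set0 S i).

End Digraph.

(* The paths are built backwards, one class at a time.  Suppose the vertices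
   outside S_1, ..., S_i are covered by disjoint paths whose j-th vertices lie
   in S_(i+j); their first vertices lie in S_(i+1).  By maximality of S_i,
   every Y included in S_(i+1) has at least |Y| in-neighbours in S_i:
   otherwise Y together with the vertices of S_i sending no arc into Y would
   be a larger acyclic set, since a cycle entering the second part can never
   leave it.  Hall's theorem thus matches S_(i+1) injectively into S_i along
   arcs; prefixing each path with the in-neighbour matched to its first
   vertex, and adding the unmatched vertices of S_i as one-vertex paths,
   covers every vertex outside S_1, ..., S_(i-1). *)

From mathcomp Require Import all_boot zify.
Set Implicit Arguments. Unset Strict Implicit. Unset Printing Implicit Defensive.

Section Hall.
Variables (A B : finType) (r : A -> B -> bool).

Definition neighbours (Bs : {set B}) (Y : {set A}) : {set B} :=
  [set b in Bs | [exists a in Y, r a b]].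

Definition hall_condition (X : {set A}) (Bs : {set B}) : Prop :=
  forall Y : {set A}, Y \subset X -> #|Y| <= #|neighbours Bs Y|.

Definition matching_into (X : {set A}) (Bs : {set B}) (f : A -> B) : Prop :=
  [/\ {in X &, injective f}, {in X, forall a, f a \in Bs}
    & {in X, forall a, r a (f a)}].

Lemma matching_intoS (X : {set A}) (Bs Bs' : {set B}) (f : A -> B) :
  Bs \subset Bs' -> matching_into X Bs f -> matching_into X Bs' f.
Proof. by move=> /subsetP sBs [fi fBs fr]; split=> // a /fBs/sBs. Qed.

Lemma matching_imset_neighbours (X : {set A}) (Bs : {set B}) (f : A -> B) :
  matching_into X Bs f -> f @: X \subset neighbours Bs X.
Proof.
case=> _ fBs fr; apply/subsetP=> _ /imsetP[a aX ->].
by rewrite inE fBs //=; apply/existsP; exists a; rewrite aX fr.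
Qed.

Lemma matching_glue (X Y : {set A}) (Bs : {set B}) (f g : A -> B) :
  matching_into Y Bs f -> matching_into (X :\: Y) (Bs :\: f @: Y) g ->
  matching_into X Bs (fun a => if a \in Y then f a else g a).
Proof.
move=> [fi fBs fr] [gi gBs gr].
have gXY a : a \in X -> a \notin Y -> g a \in Bs :\: f @: Y.
  by move=> aX aY; apply: gBs; rewrite inE aY.
split.
- move=> a1 a2 a1X a2X /=.
  case: ifP => a1Y; case: ifP => a2Y; first exact: fi.
  + move=> eq_f; have := gXY _ a2X (negbT a2Y).
    by rewrite -eq_f inE imset_f.
  + move=> eq_f; have := gXY _ a1X (negbT a1Y).
    by rewrite eq_f inE imset_f.
  + by apply: gi; rewrite inE ?a1Y ?a2Y.
- move=> a aX /=; case: ifP => aY; first exact: fBs.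
  by have /setDP[] := gXY _ aX (negbT aY).
- move=> a aX /=; case: ifP => aY; first exact: fr.
  by apply: gr; rewrite inE aY.
Qed.

Lemma hall_conditionS (X X' : {set A}) (Bs : {set B}) :
  X' \subset X -> hall_condition X Bs -> hall_condition X' Bs.
Proof. by move=> sX hX Y sY; apply/hX/(subset_trans sY). Qed.

Lemma hall_condition_tight (X Y : {set A}) (Bs : {set B}) :
  hall_condition X Bs -> Y \subset X -> #|neighbours Bs Y| <= #|Y| ->
  hall_condition (X :\: Y) (Bs :\: neighbours Bs Y).
Proof.
move=> hX sYX tightY Z sZ.
have sZX : Z \subset X := subset_trans sZ (subsetDl _ _).
have disjZY : Z :&: Y = set0.
  apply/setP=> a; rewrite !inE; apply/andP=> -[aZ aY].
  by have := subsetP sZ a aZ; rewrite inE aY.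
have := hX (Z :|: Y); rewrite subUset sZX sYX cardsU disjZY cards0 => /(_ isT).
suff sN : neighbours Bs (Z :|: Y)
            \subset neighbours (Bs :\: neighbours Bs Y) Z :|: neighbours Bs Y.
  by have := subset_leq_card sN; rewrite cardsU; lia.
apply/subsetP=> b; rewrite !inE => /andP[bBs /existsP[a /andP[aZY rab]]].
rewrite bBs /=; case: existsP => [|noY]; rewrite ?orbT // orbF.
move: aZY; rewrite inE => /orP[aZ|aY]; first by apply/existsP; exists a; rewrite aZ.
by case: noY; exists a; rewrite aY.
Qed.

Lemma hall_condition_slack (X : {set A}) (Bs : {set B}) (a : A) (b : B) :
  a \in X ->
  (forall Z : {set A},
     Z \subset X -> Z != set0 -> Z != X -> #|Z| < #|neighbours Bs Z|) ->
  hall_condition (X :\ a) (Bs :\ b).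
Proof.
move=> aX slackX Z /subsetD1P[sZX aZ].
have [->|[z zZ]] := set_0Vmem Z; first by rewrite cards0.
have Z_neq0 : Z != set0 by apply/set0Pn; exists z.
have Z_neqX : Z != X by apply: contraNneq aZ => ->.
have := slackX Z sZX Z_neq0 Z_neqX.
have sN : neighbours Bs Z :\ b \subset neighbours (Bs :\ b) Z.
  by apply/subsetP=> c; rewrite !inE => /andP[-> /andP[-> ->]].
have := subset_leq_card sN; have := cardsD1 b (neighbours Bs Z); lia.
Qed.

Theorem hall_marriage (b0 : B) (X : {set A}) (Bs : {set B}) :
  hall_condition X Bs -> exists f, matching_into X Bs f.
Proof.
have [n] := ubnP #|X|; elim: n X Bs => // n IH X Bs ltXn hX.
have [X0|[a aX]] := set_0Vmem X.
  by exists (fun=> b0); rewrite X0; split=> ?; rewrite inE.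
(* Either a nonempty proper Y is tight, and Y and X :\: Y are matched
   separately, or every such Y has a surplus, and any arc at a can be used. *)
case: (boolP [exists Y : {set A},
         [&& Y \subset X, Y != set0, Y != X & #|neighbours Bs Y| <= #|Y|]]).
  case/existsP=> Y /and4P[sYX Y_neq0 Y_neqX tightY].
  have ltYX : #|Y| < #|X| by apply: proper_card; rewrite properEneq Y_neqX.
  have [f fM] := IH Y Bs (leq_trans ltYX ltXn) (hall_conditionS sYX hX).
  have [||g gM] := IH (X :\: Y) (Bs :\: neighbours Bs Y).
  - by move: ltXn Y_neq0; rewrite cardsD (setIidPr sYX) -card_gt0; lia.
  - exact: hall_condition_tight.
  have gM' := matching_intoS (setDS _ (matching_imset_neighbours fM)) gM.
  by exists (fun a => if a \in Y then f a else g a); apply: matching_glue gM'.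
rewrite negb_exists => /forallP slackX.
have /card_gt0P[b] : 0 < #|neighbours Bs [set a]|.
  by have := hX [set a]; rewrite sub1set aX cards1 => /(_ isT).
rewrite inE => /andP[bBs /existsP[_ /andP[/set1P-> rab]]].
have [||g gM] := IH (X :\ a) (Bs :\ b).
- by move: ltXn; rewrite (cardsD1 a X) aX; lia.
- apply: hall_condition_slack => // Z sZX Z_neq0 Z_neqX.
  by have := slackX Z; rewrite sZX Z_neq0 Z_neqX ltnNge.
have fM : matching_into [set a] Bs (fun=> b).
  by split=> [? ? /set1P-> /set1P-> | ? _ | ? /set1P->].
rewrite -(imset_set1 (fun=> b) a) in gM.
by exists (fun x => if x \in [set a] then b else g x); apply: matching_glue gM.
Qed.

End Hall.

Section Acyclic.
Variables (T : finType) (e : rel T).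

Lemma acyclic_subset (A B : {set T}) :
  A \subset B -> acyclic_set e B -> acyclic_set e A.
Proof. by move=> /subsetP sAB acB c cycc /(_ _ _)/sAB; apply: acB. Qed.

Lemma acyclic_set0 : acyclic_set e set0.
Proof. by case=> [|x c] // _ /(_ x (mem_head _ _)); rewrite inE. Qed.

Lemma path_trapped (A B : {set T}) x s :
  (forall u v, u \in B -> v \in A -> ~~ e u v) ->
  x \in B -> path e x s -> all (mem (A :|: B)) s -> all (mem B) s.
Proof.
move=> noBA; elim: s x => //= y s IH x xB /andP[exy pys] /andP[yAB sAB].
have yB : y \in B.
  by case/setUP: yAB => // yA; case/negP: (noBA _ _ xB yA).
by rewrite yB (IH y).
Qed.

Lemma acyclic_setU (A B : {set T}) :
  acyclic_set e A -> acyclic_set e B ->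
  (forall u v, u \in B -> v \in A -> ~~ e u v) -> acyclic_set e (A :|: B).
Proof.
move=> acA acB noBA c cycc sAB; have /and3P[_ _ cc] := cycc.
have [/hasP[y yc yB]|/hasPn noB] := boolP (has (mem B) c); last first.
  by apply: (acA c cycc) => x xc; case/setUP: (sAB x xc) => // /(negP (noB x xc)).
apply: (acB c cycc); have [i s def_c] := rot_to yc.
have : cycle e (rot i c) by rewrite rot_cycle.
rewrite def_c /= rcons_path => /andP[pys _].
have sAB' : all (mem (A :|: B)) s.
  by apply/allP=> x xs; apply: sAB; rewrite -(mem_rot i) def_c inE xs orbT.
have /allP sB := path_trapped noBA yB pys sAB'.
by move=> x; rewrite -(mem_rot i) def_c inE => /predU1P[->|/sB].
Qed.

End Acyclic.

Section PathExtension.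
Variables (T : finType) (e : rel T).

Lemma is_dipath_cons x p :
  is_dipath e p -> e x (head x p) -> x \notin p -> is_dipath e (x :: p).
Proof. by case: p => //= y p /andP[-> ->] -> ->. Qed.

Lemma perm_flatten_cons (g : seq T -> T) (P : seq (seq T)) :
  perm_eq (flatten [seq g p :: p | p <- P]) ([seq g p | p <- P] ++ flatten P).
Proof.
by elim: P => //= p P IH; rewrite perm_cons perm_sym perm_catCA perm_cat2l perm_sym.
Qed.

Lemma uniq_map_head x0 (P : seq (seq T)) :
  uniq (flatten P) -> [::] \notin P -> uniq (map (head x0) P).
Proof.
elim: P => //= p P IH; rewrite cat_uniq in_cons negb_or.
move=> /and3P[_ disj uniqP] /andP[p_neq0 nilP]; rewrite IH // andbT.
apply/mapP=> -[q qP]; case: p p_neq0 disj => // y p _ disj /= def_y.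
case: q qP def_y => [|z q] qP /= def_y; first by rewrite qP in nilP.
case/hasP: disj; exists z; last by rewrite -def_y mem_head.
by apply/flattenP; exists (z :: q); rewrite ?mem_head.
Qed.

Variables (x0 : T) (f : T -> T) (A B : {set T}) (P : seq (seq T)).

Definition matched_heads := [seq f (head x0 p) | p <- P].

Definition extend_paths : seq (seq T) :=
  [seq f (head x0 p) :: p | p <- P] ++
  [seq [:: v] | v <- enum A & v \notin matched_heads].

Hypotheses (fM : matching_into (fun y x => e x y) B A f)
           (headsB : {in P, forall p, head x0 p \in B})
           (disjA : {in flatten P, forall v, v \notin A}).

Lemma matched_heads_sub : {subset matched_heads <= A}.
Proof. by case: fM => _ fA _ _ /mapP[p pP ->]; exact/fA/headsB. Qed.

Lemma perm_flatten_extend_paths :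
  perm_eq (flatten extend_paths)
          (matched_heads ++ flatten P ++ [seq v <- enum A | v \notin matched_heads]).
Proof.
rewrite flatten_cat flatten_seq1 catA perm_cat2r.
exact: (perm_flatten_cons (fun p => f (head x0 p))).
Qed.

Lemma mem_flatten_extend_paths v :
  (v \in flatten extend_paths) = (v \in A) || (v \in flatten P).
Proof.
rewrite (perm_mem perm_flatten_extend_paths) !mem_cat mem_filter mem_enum.
have [/matched_heads_sub -> //|_] := boolP (v \in matched_heads).
by rewrite /= orbC.
Qed.

Lemma uniq_flatten_extend_paths :
  uniq (flatten P) -> [::] \notin P -> uniq (flatten extend_paths).
Proof.
move=> uniqP nilP; case: fM => f_inj _ _.
rewrite (perm_uniq perm_flatten_extend_paths) !cat_uniq uniqP filter_uniq ?enum_uniq //.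
have -> : uniq matched_heads.
  rewrite /matched_heads (map_comp f (head x0)) map_inj_in_uniq ?uniq_map_head //.
  by move=> y z /mapP[p pP ->] /mapP[q qP ->]; apply: f_inj; apply: headsB.
rewrite andbT /= has_cat negb_or -andbA; apply/and3P; split.
- by apply/hasPn=> v /disjA; apply: contra; apply: matched_heads_sub.
- by apply/hasPn=> v; rewrite mem_filter => /andP[].
- apply/hasPn=> v; rewrite mem_filter mem_enum => /andP[_ vA].
  by apply: contraL vA; apply: disjA.
Qed.

Lemma all_dipath_extend_paths :
  all (is_dipath e) P -> all (is_dipath e) extend_paths.
Proof.
case: fM => _ fA f_arc /allP dipP; rewrite all_cat all_map.
apply/andP; split; last by apply/allP=> _ /mapP[v _ ->].
apply/allP=> p pP /=; have := dipP p pP; case: p pP => // y p yP dip_yp.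
apply: is_dipath_cons => //=; first exact/f_arc/(headsB yP).
apply: contraL (fA _ (headsB yP)) => fy_yp; apply: disjA.
by apply/flattenP; exists (y :: p).
Qed.

End PathExtension.

Section GreedyDicoloring.
Variables (T : finType) (e : rel T) (S : seq {set T}).

Lemma remaining0 : remaining S 0 = setT.
Proof. by rewrite /remaining big_ord0 setC0. Qed.

Lemma remainingS i : remaining S i.+1 = remaining S i :\: nth set0 S i.
Proof. by rewrite /remaining big_ord_recr setCU setDE. Qed.

Definition good_path_partition_from i (P : seq (seq T)) : Prop :=
  [/\ all (is_dipath e) P, uniq (flatten P), flatten P =i remaining S i
    & {in P, forall p x0 k, k < size p -> nth x0 p k \in nth set0 S (i + k)}].

Hypothesis greedyS : greedy_dicoloring e S.

Lemma remaining_size : remaining S (size S) = set0.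
Proof.
apply/setP=> v; rewrite !inE; apply/negbF/bigcupP.
by have [i ltiS vSi] := greedyS.2 v; exists (Ordinal ltiS).
Qed.

Lemma nth_sub_remaining i : nth set0 S i \subset remaining S i.
Proof.
have [ltiS|geiS] := ltnP i (size S); first by case: (greedyS.1 i ltiS).
by rewrite nth_default ?sub0set.
Qed.

Lemma acyclic_nth i : acyclic_set e (nth set0 S i).
Proof.
have [ltiS|geiS] := ltnP i (size S); first by case: (greedyS.1 i ltiS).
by rewrite nth_default //; apply: acyclic_set0.
Qed.

Lemma greedy_hall_condition i :
  hall_condition (fun y x => e x y) (nth set0 S i.+1) (nth set0 S i).
Proof.
move=> Y sY; have [ltiS|geiS] := ltnP i (size S); last first.
  by move: sY; rewrite (nth_default _ (leqW geiS)) subset0 => /eqP->; rewrite cards0.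
have [_ sSi acSi maxSi] := greedyS.1 i ltiS.
set Si := nth set0 S i in sSi acSi maxSi *; set N := neighbours _ Si Y.
rewrite leqNgt; apply/negP=> ltNY.
have sYrem : Y \subset remaining S i :\: Si.
  by rewrite -remainingS; apply: subset_trans sY (nth_sub_remaining _).
have sNSi : N \subset Si by apply/subsetP=> x; rewrite inE => /andP[].
have noarc u v : u \in Si :\: N -> v \in Y -> ~~ e u v.
  move=> /setDP[uSi uN] vY; apply: contra uN => euv.
  by rewrite inE uSi; apply/existsP; exists v; rewrite vY.
have acA := acyclic_setU (acyclic_subset sY (@acyclic_nth i.+1))
                         (acyclic_subset (subsetDl Si N) acSi) noarc.
have sArem : Y :|: (Si :\: N) \subset remaining S i.
  rewrite subUset (subset_trans sYrem (subsetDl _ _)).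
  exact: subset_trans (subsetDl _ _) sSi.
have disjY : Y :&: (Si :\: N) = set0.
  apply/setP=> x; rewrite !inE; apply/andP=> -[xY /andP[_ xSi]].
  by have := subsetP sYrem x xY; rewrite inE xSi.
have := maxSi _ sArem acA; have := subset_leq_card sNSi.
by rewrite cardsU disjY cards0 cardsD (setIidPr sNSi); lia.
Qed.

Lemma good_path_partition_from_size : good_path_partition_from (size S) [::].
Proof. by split=> // v; rewrite remaining_size inE. Qed.

Lemma good_path_partition_from_pred i P :
  i < size S -> good_path_partition_from i.+1 P ->
  exists Q, good_path_partition_from i Q.
Proof.
move=> ltiS [dipP uniqP memP nthP].
have [/set0Pn[x0 _] _ _ _] := greedyS.1 i ltiS.
have [f fM] := hall_marriage x0 (@greedy_hall_condition i).
have nilP : [::] \notin P by apply: contraL dipP => nilP; apply/allPn; exists [::].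
have headsB : {in P, forall p, head x0 p \in nth set0 S i.+1}.
  move=> [|y p] pP; first by rewrite pP in nilP.
  by have := nthP _ pP x0 0; rewrite addn0; apply.
have disjA : {in flatten P, forall v, v \notin nth set0 S i}.
  by move=> v; rewrite memP remainingS => /setDP[].
exists (extend_paths x0 f (nth set0 S i) P); split.
- exact: all_dipath_extend_paths fM headsB disjA dipP.
- exact: uniq_flatten_extend_paths fM headsB disjA uniqP nilP.
- move=> v; rewrite (mem_flatten_extend_paths fM headsB) memP remainingS inE.
  have [vSi|//] := boolP (v \in nth set0 S i).
  by rewrite (subsetP (nth_sub_remaining i) v vSi).
- move=> p; rewrite mem_cat => /orP[/mapP[q qP ->] | /mapP[v vA ->]] y [|k] //=.
  + by case: fM => _ fA _ _; rewrite addn0; apply/fA/headsB.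
  + by rewrite ltnS addnS -addSn; apply: nthP.
  + by move: vA; rewrite mem_filter mem_enum addn0 => /andP[].
Qed.

Lemma good_path_partition_from0 : exists P, good_path_partition_from 0 P.
Proof.
suff: forall k, k <= size S -> exists P, good_path_partition_from (size S - k) P.
  by move=> /(_ (size S) (leqnn _)); rewrite subnn.
elim=> [|k IH] leks.
  by exists [::]; rewrite subn0; apply: good_path_partition_from_size.
have [P] := IH (ltnW leks); rewrite -subnSK // => /good_path_partition_from_pred.
by apply; lia.
Qed.

End GreedyDicoloring.

Theorem mainTheorem5 (T : finType) (e : rel T) (S : seq {set T}) :
  irreflexive e ->
  greedy_dicoloring e S ->
  exists P : seq (seq T), good_path_partition e S P.
Proof.
(* Irreflexivity is implied by greedy_dicoloring: a looped vertex lies in no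
   acyclic class. *)
move=> _ greedyS.
have [P [dipP uniqP memP nthP]] := good_path_partition_from0 greedyS.
exists P; split; first by split=> // v; rewrite memP remaining0 inE.
by move=> p pP x0 i; rewrite -[i]add0n; apply: nthP.
Qed.
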